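(* Let $\Bbbk$ be an algebraically closed field of characteristic zero and $n\ge 2$. Consider $A=\Bbbk[x]/(x^n)$ with the Frobenius structure determined by $\Delta(1)=\sum_{i=0}^{n-1}x^i\otimes x^{n-1-i}$ (so $\Delta(a)=(a\otimes1)\Delta(1)$) and counit $\varepsilon(x^{n-1})=1$, $\varepsilon(x^j)=0$ for $j<n-1$. Then: (a) if $n$ is even, $A$ admits no extended structure; (b) if $n$ is odd, the extended structures on $A$ are exactly $\phi=\mathrm{id}_A$ together with $\theta=\pm\sqrt n\,x^{(n-1)/2}+\sum_{j=(n+1)/2}^{n-1}\theta_jx^j$ for arbitrary $\theta_{(n+1)/2},\dots,\theta_{n-1}\in\Bbbk$.
   Context: A Frobenius algebra over $\Bbbk$ is a tuple $(A,m,u,\Delta,\varepsilon)$ where $(A,m,u)$ is an associative unital algebra and $(A,\Delta,\varepsilon)$ is a coassociative counital coalgebra satisfying $(a\otimes 1_A)\Delta(b)=\Delta(ab)=\Delta(a)(1_A\otimes b)$. A Frobenius algebra morphism is both an algebra and coalgebra morphism. An extended structure on $A$ is a pair $(\phi,\theta)$, $\phi:A\to A$ linear, $\theta\in A$, with: (i) $\phi$ a Frobenius algebra morphism with $\phi^2=\mathrm{id}_A$; (ii) $\phi(\theta a)=\theta a$ for all $a\in A$; (iii) $m(\phi\otimes\mathrm{id}_A)\Delta(1_A)=\theta^2$. *)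

From HB Require Import structures.
From mathcomp Require Import all_boot all_order all_algebra.
Set Implicit Arguments. Unset Strict Implicit. Unset Printing Implicit Defensive.
Import Order.TTheory GRing.Theory Num.Theory.
Local Open Scope ring_scope.

(* A = K[x]/(x^n), an element a is represented by its coefficient row vector
   a : 'rV[K]_n, with a 0 i the coefficient of x^i.
   A (x) A is represented by 'M[K]_n : T i j is the coefficient of x^i (x) x^j. *)
Section Truncated.
Variables (K : fieldType) (n : nat).

(* the basis element x^i (zero if i >= n) *)
Definition xpow (i : nat) : 'rV[K]_n := \row_(k < n) (k == i :> nat)%:R.

Definition tmul (a b : 'rV[K]_n) : 'rV[K]_n :=
  \row_(k < n) \sum_(i < n) \sum_(j < n | (i + j)%N == k) a 0 i * b 0 j.

Definition tone : 'rV[K]_n := xpow 0.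

Definition tensor (a b : 'rV[K]_n) : 'M[K]_n := a^T *m b.

Definition tmap (f g : 'rV[K]_n -> 'rV[K]_n) (T : 'M[K]_n) : 'M[K]_n :=
  \sum_(i < n) \sum_(j < n) T i j *: tensor (f (xpow i)) (g (xpow j)).

Definition tm (T : 'M[K]_n) : 'rV[K]_n :=
  \sum_(i < n) \sum_(j < n) T i j *: tmul (xpow i) (xpow j).

Definition Delta1 : 'M[K]_n := \sum_(i < n) tensor (xpow i) (xpow (n.-1 - i)).

Definition Delta (a : 'rV[K]_n) : 'M[K]_n := tmap (tmul a) id Delta1.

Definition eps (a : 'rV[K]_n) : K := \sum_(i < n | (i : nat) == n.-1) a 0 i.

Definition frob_morph (phi : 'rV[K]_n -> 'rV[K]_n) : Prop :=
  [/\ forall a b, phi (tmul a b) = tmul (phi a) (phi b),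
      phi tone = tone,
      forall a, Delta (phi a) = tmap phi phi (Delta a) &
      forall a, eps (phi a) = eps a].

Definition extended_structure (phi : {linear 'rV[K]_n -> 'rV[K]_n})
    (theta : 'rV[K]_n) : Prop :=
  [/\ frob_morph phi,
      forall a, phi (phi a) = a,
      forall a, phi (tmul theta a) = tmul theta a &
      tm (tmap phi id Delta1) = tmul theta theta].

End Truncated.
Arguments xpow {K n}.
Arguments tone {K n}.
Arguments Delta1 {K n}.

From HB Require Import structures.
From mathcomp Require Import all_boot all_order all_algebra all_field ring.
Import GRing.Theory.
Local Open Scope ring_scope.

(* Truncating polynomials identifies A with K[x]/(x^n).  A Frobenius morphism phi
   is determined by y := phi(x), as phi(x^k) = y^k.  Since y^n = 0 we have y = x u,
   and with c := u(0) the counit forces c^(n-1) = 1.  Then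
   m (phi (x) id) Delta(1) = sum_i y^i x^(n-1-i) = (sum_(i<n) c^i) x^(n-1), and
   sum_(i<n) c^i is n if c = 1 and 1 otherwise, nonzero in characteristic 0.  So
   condition (iii) reads theta^2 = (sum_i c^i) x^(n-1): the lowest term theta_w x^w
   of theta satisfies 2w = n-1 and theta_w^2 = sum_i c^i, hence n is odd.
   By (ii), theta kills phi(a) - a, so phi(a) - a lies in x^(w+1) A; phi fixes this
   ideal pointwise, and phi^2 = id gives 2 (phi(a) - a) = 0.  Thus phi = id, c = 1
   and theta_w^2 = n.  Conversely, for phi = id only (iii) is a constraint, and it
   involves only the coefficient of x^(n-1) = x^(2w) in theta^2, namely theta_w^2. *)

Section Polynomials.
Context {K : fieldType}.
Implicit Types p q : {poly K}.

Lemma coef0_expr p k : (p ^+ k)`_0 = p`_0 ^+ k.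
Proof. by rewrite -!horner_coef0 horner_exp. Qed.

Lemma eq_drop_polyMXn p w :
  (forall k, (k < w)%N -> p`_k = 0) -> p = drop_poly w p * 'X^w.
Proof.
move=> low; rewrite -[LHS](poly_take_drop w) [take_poly w p](_ : _ = 0) ?add0r //.
by apply/polyP=> k; rewrite coef_take_poly coef0; case: ifP => // /low.
Qed.

Lemma first_nonzero_coef p m :
  (forall k, (k < m)%N -> p`_k = 0) \/
  exists w, [/\ (w < m)%N, p`_w != 0 & forall k, (k < w)%N -> p`_k = 0].
Proof.
elim: m => [|m [IH|IH]]; first by left.
- have [pm|pm] := eqVneq p`_m 0; last by right; exists m.
  by left=> k; rewrite ltnS leq_eqVlt => /orP[/eqP->|/IH].
- by right; have [w [wm pw low]] := IH; exists w; split=> //; apply: ltnW.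
Qed.

Lemma geometric_sum_neq0 m (c : K) :
  [pchar K] =i pred0 -> (0 < m)%N -> c ^+ m.-1 = 1 -> \sum_(i < m) c ^+ i != 0.
Proof.
move=> pchar0 m0 cm; have [->|c1] := eqVneq c 1.
  under eq_bigr do rewrite expr1n.
  by rewrite sumr_const card_ord; have /pcharf0P -> := pchar0; rewrite -lt0n.
have : (c - 1) * \sum_(i < m) c ^+ i = (c - 1) * 1.
  by rewrite -subrX1 mulr1 -(prednK m0) exprS cm mulr1.
by move/(mulfI _) ->; [exact: oner_neq0 | rewrite subr_eq0].
Qed.

End Polynomials.

Arguments eq_drop_polyMXn {K p w}.

Section Truncation.
Context {K : fieldType} {n : nat}.
Local Notation rV := 'rV[K]_n.

Definition trunc (p : {poly K}) : rV := \row_(k < n) p`_k.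

Definition poly_of_row (a : rV) : {poly K} := \sum_(i < n) a 0 i *: 'X^i.

Lemma trunc_is_linear : linear trunc.
Proof. by move=> c p q; apply/rowP=> k; rewrite !mxE coefD coefZ. Qed.
HB.instance Definition _ :=
  GRing.isLinear.Build K {poly K} rV _ trunc trunc_is_linear.

Lemma trunc_eqP p q : trunc p = trunc q <-> (forall k, (k < n)%N -> p`_k = q`_k).
Proof.
split=> [e k kn|e]; last by apply/rowP=> k; rewrite !mxE e.
by move/rowP: e => /(_ (Ordinal kn)); rewrite !mxE.
Qed.

Lemma xpowE i : xpow i = trunc 'X^i.
Proof. by apply/rowP=> k; rewrite !mxE coefXn. Qed.

Lemma toneE : tone = trunc 1.
Proof. by rewrite /tone xpowE expr0. Qed.

Lemma row_sum_xpow (a : rV) : a = \sum_(j < n) a 0 j *: xpow j.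
Proof.
apply/rowP=> k; rewrite summxE (bigD1 k) //= big1 => [|j jk].
  by rewrite !mxE eqxx mulr1 addr0.
by rewrite !mxE val_eqE eq_sym (negbTE jk) mulr0.
Qed.

Lemma poly_of_rowK : cancel poly_of_row trunc.
Proof.
move=> a; rewrite [RHS]row_sum_xpow linear_sum.
by apply: eq_bigr => i _; rewrite linearZ xpowE.
Qed.

Lemma coef_poly_of_row (a : rV) (k : 'I_n) : (poly_of_row a)`_k = a 0 k.
Proof. by rewrite -[in RHS](poly_of_rowK a) mxE. Qed.

Lemma tmul_trunc p q : tmul (trunc p) (trunc q) = trunc (p * q).
Proof.
apply/rowP=> k; rewrite !mxE coefM.
transitivity (\sum_(i < n) if (i <= k)%N then p`_i * q`_(k - i) else 0).
  apply: eq_bigr => i _; case: ifPn => ik.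
    have kin : (k - i < n)%N by apply: leq_ltn_trans (leq_subr _ _) (ltn_ord k).
    rewrite (big_pred1 (Ordinal kin)) ?mxE //= => j /=.
    apply/eqP/eqP=> [e|->]; first by apply/val_inj; rewrite /= -e addKn.
    by rewrite /= subnKC.
  rewrite big_pred0 // => j; apply/negbTE; apply: contra ik => /eqP <-.
  exact: leq_addr.
by rewrite -big_mkcond (big_ord_widen n (fun i => p`_i * q`_(k - i))).
Qed.

Lemma tmulr1 (a : rV) : tmul a tone = a.
Proof. by rewrite -(poly_of_rowK a) toneE tmul_trunc mulr1. Qed.

Lemma trunc_expr p q k : trunc p = trunc q -> trunc (p ^+ k) = trunc (q ^+ k).
Proof.
move=> e; elim: k => [|k IH]; first by rewrite !expr0.
by rewrite !exprSr -!tmul_trunc IH e.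
Qed.

Lemma trunc_XnM m p : (n <= m)%N -> trunc ('X^m * p) = 0.
Proof.
move=> nm; apply/rowP=> k; rewrite !mxE coefXnM.
by rewrite (leq_trans (ltn_ord k) nm).
Qed.

Lemma eps_trunc p : (0 < n)%N -> eps (trunc p) = p`_n.-1.
Proof.
move=> n0; have n1n : (n.-1 < n)%N by rewrite ltn_predL.
by rewrite /eps (big_pred1 (Ordinal n1n)) ?mxE.
Qed.

Lemma tensorE (a b : rV) i j : tensor a b i j = a 0 i * b 0 j.
Proof. by rewrite !mxE big_ord1 mxE. Qed.

Lemma tm_tensor (a b : rV) : tm (tensor a b) = tmul a b.
Proof.
rewrite -{2}(poly_of_rowK a) -{2}(poly_of_rowK b) tmul_trunc.
rewrite /poly_of_row mulr_suml linear_sum; apply: eq_bigr => i _.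
rewrite mulr_sumr linear_sum; apply: eq_bigr => j _.
by rewrite -scalerAl -scalerAr scalerA linearZ tensorE !xpowE tmul_trunc.
Qed.

Lemma tm_sum (I : finType) (F : I -> 'M[K]_n) : tm (\sum_i F i) = \sum_i tm (F i).
Proof.
rewrite /tm [RHS]exchange_big /=; apply: eq_bigr => i _.
rewrite [RHS]exchange_big /=; apply: eq_bigr => j _.
by rewrite summxE scaler_suml.
Qed.

Lemma tmap_Delta1 (f : rV -> rV) :
  tmap f id Delta1 = \sum_(i < n) tensor (f (xpow i)) (xpow (n.-1 - i)).
Proof.
apply: eq_bigr => i _.
transitivity (\sum_(j < n) xpow (n.-1 - i) 0 j *: tensor (f (xpow i)) (xpow j)).
  apply: eq_bigr => j _; congr (_ *: _).
  rewrite /Delta1 summxE (bigD1 i) //= big1 => [|k ki].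
    by rewrite tensorE !mxE eqxx mul1r addr0.
  by rewrite tensorE !mxE val_eqE eq_sym (negbTE ki) mul0r.
rewrite [in RHS](row_sum_xpow (xpow (n.-1 - i))) /tensor mulmx_sumr.
by apply: eq_bigr => j _; rewrite scalemxAr.
Qed.

Lemma row_lowest_expansion (a : rV) w :
  (forall k, (k < w)%N -> (poly_of_row a)`_k = 0) ->
  a = (poly_of_row a)`_w *: xpow w + \sum_(j < n | (w < j)%N) a 0 j *: xpow j.
Proof.
move=> low; apply/rowP => k; rewrite !mxE summxE.
have -> : \sum_(j < n | (w < j)%N) (a 0 j *: xpow j) 0 k = if (w < k)%N then a 0 k else 0.
  case: ifP => wk.
    rewrite (bigD1 k) //= big1 => [|j /andP[_ jk]]; first by rewrite !mxE eqxx mulr1 addr0.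
    by rewrite !mxE val_eqE eq_sym (negbTE jk) mulr0.
  apply: big1 => j wj; rewrite !mxE; case: eqP => [kj|]; last by rewrite mulr0.
  by move: wk; rewrite kj wj.
rewrite -coef_poly_of_row; case: (ltngtP k w) => [kw|wk|->].
- by rewrite low // mulr0 addr0.
- by rewrite mulr0 add0r coef_poly_of_row.
- by rewrite mulr1 addr0.
Qed.

Lemma tmap_idE (f g : rV -> rV) (T : 'M[K]_n) :
  (forall a, f a = a) -> (forall a, g a = a) -> tmap f g T = T.
Proof.
move=> fE gE; rewrite [RHS](matrix_sum_delta T); apply: eq_bigr => i _.
apply: eq_bigr => j _; rewrite fE gE; congr (_ *: _).
by apply/matrixP=> k l; rewrite tensorE !mxE -natrM mulnb.
Qed.

Lemma tm_Delta1 : (0 < n)%N -> tm Delta1 = trunc 'X^(n.-1) *+ n.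
Proof.
move=> n0; rewrite tm_sum -[X in _ *+ X](card_ord n) -sumr_const.
apply: eq_bigr => i _; rewrite tm_tensor !xpowE tmul_trunc -exprD subnKC //.
by rewrite -ltnS prednK.
Qed.

Lemma trunc_mul_eq0 (p q : {poly K}) w m :
  p`_w != 0 -> (forall k, (k < w)%N -> p`_k = 0) ->
  (w + m <= n)%N -> trunc (p * q) = 0 -> forall k, (k < m)%N -> q`_k = 0.
Proof.
move=> pw plow wmn pq0; have [//|[u [um qu qlow]]] := first_nonzero_coef q m.
have wun : (w + u < n)%N by rewrite (leq_trans _ wmn) // ltn_add2l.
move/rowP: pq0 => /(_ (Ordinal wun)); rewrite !mxE.
rewrite (eq_drop_polyMXn plow) (eq_drop_polyMXn qlow) mulrACA -exprD coefMXn ltnn subnn.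
by rewrite coef0M !coef_drop_poly !add0n => /eqP; rewrite mulf_eq0 (negbTE pw) (negbTE qu).
Qed.

Lemma trunc_sqr_monomial (T : {poly K}) (c : K) : c != 0 -> (0 < n)%N ->
  trunc (T * T) = trunc (c *: 'X^(n.-1)) ->
  exists w, [/\ n = w.*2.+1, T`_w ^+ 2 = c, T`_w != 0 &
                forall k, (k < w)%N -> T`_k = 0].
Proof.
move=> c0 n0 /trunc_eqP TT; have n1n : (n.-1 < n)%N by rewrite ltn_predL.
have [Tlow|[w [wn Tw Tlow]]] := first_nonzero_coef T n.
  move: (TT _ n1n); rewrite coefZ coefXn eqxx mulr1 coefM big1 => [/esym/eqP|j _].
    by rewrite (negbTE c0).
  by rewrite Tlow ?mul0r // (leq_trans (ltn_ord j)) // prednK.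
have TTE : T * T = drop_poly w T ^+ 2 * 'X^(w + w)%N.
  by rewrite {1 2}(eq_drop_polyMXn Tlow) mulrACA -expr2 -exprD.
have TTww : (T * T)`_(w + w)%N = T`_w ^+ 2.
  by rewrite TTE coefMXn ltnn subnn expr2 coef0M coef_drop_poly add0n.
have [wwn|nww] := ltnP (w + w)%N n.
  move: (TT _ wwn); rewrite TTww coefZ coefXn.
  have [ww Tw2|_] := eqVneq (w + w)%N n.-1.
    exists w; split=> //; last by rewrite Tw2 mulr1.
    by rewrite -addnn ww prednK.
  by move/eqP; rewrite mulr0 sqrf_eq0 (negbTE Tw).
move: (TT _ n1n); rewrite coefZ coefXn eqxx mulr1 TTE coefMXn.
by rewrite (leq_trans _ nww) ?ltn_predL // => /esym/eqP; rewrite (negbTE c0).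
Qed.

End Truncation.

Arguments trunc_expr {K n p q}.
Arguments trunc_mul_eq0 {K n p q w m}.

Section FrobeniusMorphism.
Context {K : fieldType} {n : nat}.
Context {phi : {linear 'rV[K]_n -> 'rV[K]_n}} {theta : 'rV[K]_n}.
Hypotheses (n2 : (2 <= n)%N) (pchar0 : [pchar K] =i pred0).
Hypothesis phiM : forall a b, phi (tmul a b) = tmul (phi a) (phi b).
Hypothesis phi1 : phi tone = tone.
Hypothesis eps_phi : forall a, eps (phi a) = eps a.
Hypothesis theta_sqr : tm (tmap phi id Delta1) = tmul theta theta.

Let n0 : (0 < n)%N. Proof. exact: leq_trans n2. Qed.

Local Notation y := (poly_of_row (phi (trunc 'X))).
Local Notation u := (drop_poly 1 y).
Local Notation c := u`_0.
Local Notation T := (poly_of_row theta).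

Lemma phi_truncXn k : phi (trunc 'X^k) = trunc (y ^+ k).
Proof.
elim: k => [|k IH]; first by rewrite !expr0 -toneE phi1.
by rewrite !exprSr -!tmul_trunc phiM IH poly_of_rowK.
Qed.

Lemma coef0_y : y`_0 = 0.
Proof.
have : trunc (y ^+ n) = 0 :> 'rV[K]_n.
  by rewrite -phi_truncXn -(mulr1 'X^n) trunc_XnM // linear0.
move/rowP/(_ (Ordinal n0)); rewrite !mxE /= coef0_expr => /eqP.
by rewrite expf_eq0 n0 => /eqP.
Qed.

Lemma yE : y = u * 'X.
Proof. by rewrite -['X]expr1; apply: eq_drop_polyMXn => -[_|//]; exact: coef0_y. Qed.

Lemma yXn k : y ^+ k = u ^+ k * 'X^k.
Proof. by rewrite {1}yE exprMn. Qed.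

Lemma tm_tmap_phi_Delta1 :
  tm (tmap phi id Delta1) = trunc ((\sum_(i < n) c ^+ i) *: 'X^(n.-1)).
Proof.
rewrite tmap_Delta1 tm_sum.
have -> : \sum_(i < n) tm (tensor (phi (xpow i)) (xpow (n.-1 - i)))
        = trunc ((\sum_(i < n) u ^+ i) * 'X^(n.-1)).
  rewrite mulr_suml linear_sum; apply: eq_bigr => i _.
  rewrite tm_tensor !xpowE phi_truncXn tmul_trunc yXn -mulrA -exprD subnKC //.
  by rewrite -ltnS prednK.
apply/trunc_eqP => k kn; rewrite coefMXn coefZ coefXn.
have [kn1|] := ltnP k n.-1; first by rewrite (ltn_eqF kn1) mulr0.
move=> n1k; have -> : k = n.-1 by apply/eqP; rewrite eqn_leq n1k andbT -ltnS prednK.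
by rewrite subnn eqxx mulr1 coef_sum; apply: eq_bigr => i _; exact: coef0_expr.
Qed.

Lemma c_expn1 : c ^+ n.-1 = 1.
Proof.
have := eps_phi (trunc 'X^(n.-1)).
by rewrite phi_truncXn !eps_trunc // yXn coefMXn ltnn subnn coefXn eqxx coef0_expr.
Qed.

Lemma theta_lowest_term : exists w, [/\ n = w.*2.+1, T`_w ^+ 2 = \sum_(i < n) c ^+ i,
  T`_w != 0 & forall k, (k < w)%N -> T`_k = 0].
Proof.
apply: trunc_sqr_monomial; first exact: geometric_sum_neq0 pchar0 n0 c_expn1.
  exact: n0.
by rewrite -tmul_trunc poly_of_rowK -theta_sqr tm_tmap_phi_Delta1.
Qed.

Lemma frobenius_odd : odd n.
Proof. by have [w [n_odd _ _ _]] := theta_lowest_term; rewrite n_odd /= odd_double. Qed.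

Lemma c_eq1 : (forall a, phi a = a) -> c = 1.
Proof.
move=> phi_id; have : trunc y = trunc 'X :> 'rV[K]_n by rewrite poly_of_rowK phi_id.
by move/trunc_eqP/(_ 1%N n2); rewrite {1}yE coefMX coefX.
Qed.

Section Involution.
Hypothesis phiK : forall a, phi (phi a) = a.
Hypothesis phi_thetaM : forall a, phi (tmul theta a) = tmul theta a.

Section ThetaOrder.
Context {w : nat}.
Hypotheses (n_odd : n = w.*2.+1) (Tw : T`_w != 0).
Hypothesis Tlow : forall k, (k < w)%N -> T`_k = 0.

Lemma phi_theta : phi theta = theta.
Proof. by have := phi_thetaM tone; rewrite !tmulr1. Qed.

Lemma phi_sub_high a : exists r, phi a = a + trunc ('X^(w.+1) * r).
Proof.
set D := poly_of_row (phi a) - poly_of_row a.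
have TD : trunc (T * D) = 0 :> 'rV[K]_n.
  rewrite /D mulrBr linearB /= -!tmul_trunc !poly_of_rowK -{1}phi_theta -phiM phi_thetaM.
  exact: subrr.
have Dlow := trunc_mul_eq0 Tw Tlow _ TD.
exists (drop_poly w.+1 D); rewrite mulrC -eq_drop_polyMXn; last first.
  by apply: Dlow; rewrite n_odd -addnn addnS.
by rewrite /D linearB /= !poly_of_rowK addrC subrK.
Qed.

Lemma phi_fix_high r : phi (trunc ('X^(w.+1) * r)) = trunc ('X^(w.+1) * r).
Proof.
have [r1 e1] := phi_sub_high (trunc 'X).
have ey : trunc y = trunc ('X * (1 + 'X^w * r1)) :> 'rV[K]_n.
  by rewrite poly_of_rowK e1 -linearD mulrDr mulr1 mulrA -exprS.
have eyw : trunc (y ^+ w.+1) = trunc 'X^(w.+1) :> 'rV[K]_n.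
  rewrite (trunc_expr _ ey) exprMn.
  have [s ->] : exists s, (1 + 'X^w * r1) ^+ w.+1 = 1 + 'X^w * s.
    exists (r1 * \sum_(i < w.+1) (1 + 'X^w * r1) ^+ i).
    by rewrite -(subrK 1 ((1 + 'X^w * r1) ^+ w.+1)) subrX1; ring.
  by rewrite mulrDr mulr1 linearD /= mulrA -exprD trunc_XnM ?addr0 // n_odd -addnn addSn.
have [r2 e2] := phi_sub_high (trunc r).
rewrite -[in LHS]tmul_trunc phiM phi_truncXn eyw e2 -linearD tmul_trunc.
rewrite mulrDr linearD /= mulrA -exprD (trunc_XnM (w.+1 + w.+1)) ?addr0 //.
by rewrite n_odd -addnn addSn addnS leqnSn.
Qed.

Lemma phi_eq_id a : phi a = a.
Proof.
have [r e] := phi_sub_high a.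
have := phiK a; rewrite e linearD phi_fix_high e -addrA -[in RHS](addr0 a).
move/addrI/eqP; rewrite -mulr2n -scaler_nat scaler_eq0 => /orP[|/eqP->].
  by have /pcharf0P -> := pchar0.
by rewrite addr0.
Qed.

End ThetaOrder.

Lemma involution_lowest_term : (forall a, phi a = a) /\
  exists w, [/\ n = w.*2.+1, T`_w ^+ 2 = n%:R & forall k, (k < w)%N -> T`_k = 0].
Proof.
have [w [n_odd Tw2 Tw Tlow]] := theta_lowest_term.
have phi_id := phi_eq_id n_odd Tw Tlow.
split=> //; exists w; split=> //.
rewrite Tw2 (c_eq1 phi_id); under eq_bigr do rewrite expr1n.
by rewrite sumr_const card_ord.
Qed.

End Involution.
End FrobeniusMorphism.

Lemma identity_extended_structure (K : fieldType) (n : nat)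
    (phi : {linear 'rV[K]_n -> 'rV[K]_n}) (theta : 'rV[K]_n)
    (s : K) (t : 'I_n -> K) w :
  n = w.*2.+1 -> (forall a, phi a = a) -> s ^+ 2 = n%:R ->
  theta = s *: xpow w + \sum_(j < n | (w < j)%N) t j *: xpow j ->
  extended_structure phi theta.
Proof.
move=> n_odd phi_id s2 thetaE; have n0 : (0 < n)%N by rewrite n_odd.
split=> [|a|a|]; rewrite ?phi_id //.
  by split=> [a b||a|a]; rewrite ?phi_id ?tmap_idE.
rewrite tmap_idE // tm_Delta1 //.
set Q := \sum_(j < n | (w < j)%N) t j *: 'X^(j - w.+1).
have -> : theta = trunc ('X^w * (s%:P + 'X * Q)).
  rewrite thetaE mulrDr linearD /= mulrC mul_polyC linearZ /= xpowE; congr (_ + _).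
  rewrite /Q !mulr_sumr linear_sum /=; apply: eq_bigr => j wj.
  by rewrite -!scalerAr mulrA -exprSr -exprD subnKC // linearZ /= xpowE.
rewrite tmul_trunc.
have -> : 'X^w * (s%:P + 'X * Q) * ('X^w * (s%:P + 'X * Q))
   = 'X^(w + w) * (s ^+ 2)%:P + 'X^((w + w).+1) * (2%:R * s%:P * Q + 'X * Q ^+ 2).
  by rewrite polyC_exp (exprS 'X (w + w)) exprD; ring.
rewrite linearD /= [X in _ = _ + X]trunc_XnM ?addr0; last by rewrite n_odd addnn.
by rewrite addnn s2 mulrC mul_polyC linearZ /= scaler_nat n_odd.
Qed.

Theorem mainTheorem4 (K : closedFieldType) (n : nat) :
  [pchar K] =i pred0 -> (2 <= n)%N ->
  (~~ odd n ->
     forall (phi : {linear 'rV[K]_n -> 'rV[K]_n}) (theta : 'rV[K]_n),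
       ~ extended_structure phi theta) /\
  (odd n ->
     forall (phi : {linear 'rV[K]_n -> 'rV[K]_n}) (theta : 'rV[K]_n),
       extended_structure phi theta <->
       ((forall a, phi a = a) /\
        exists (s : K) (t : 'I_n -> K),
          s ^+ 2 = n%:R /\
          theta = s *: xpow n./2 + \sum_(j < n | (n./2 < j)%N) t j *: xpow j)).
Proof.
move=> pchar0 n2; split=> [n_even phi theta [[phiM phi1 _ eps_phi] _ _ theta_sqr]|n_odd phi theta].
  by rewrite (frobenius_odd n2 pchar0 phiM phi1 eps_phi theta_sqr) in n_even.
split=> [[[phiM phi1 _ eps_phi] phiK phi_thetaM theta_sqr]|[phi_id [s [t [s2 thetaE]]]]].
  have [phi_id [w [n_w Tw2 Tlow]]] :=
    involution_lowest_term n2 pchar0 phiM phi1 eps_phi theta_sqr phiK phi_thetaM.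
  have -> : n./2 = w by rewrite n_w /= uphalf_double.
  split=> //; exists (poly_of_row theta)`_w, (fun j => theta 0 j); split=> //.
  exact: row_lowest_expansion.
apply: (@identity_extended_structure _ _ phi theta s t n./2 _ phi_id s2 thetaE).
by rewrite -[n in LHS]odd_double_half n_odd.
Qed.
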